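(* Let $v_1\ge v_2\ge\cdots\ge v_n>0$, $1\ge q_1\ge\cdots\ge q_n\ge0$, and $a_1,\dots,a_n\ge0$ with $\sum_j a_j>0$. For $\sigma\in S_n$ let $f(\sigma)=\frac{\sum_i v_{\sigma_i}a_iq_i}{\sum_j v_{\sigma_j}a_j}$, and let $\lambda^q=f(\mathrm{id})=\frac{\sum_i v_ia_iq_i}{\sum_j v_ja_j}$ (the quality ranking). Then $$\max_{\sigma\in S_n} f(\sigma)\;\le\;\frac{v_1}{v_n}\,\lambda^q.$$ Moreover the factor $v_1/v_n$ is tight: for every $c\in(0,1)$ and every $\delta>0$ there exist appeals $a_1,a_2,a_3\ge0$ (not all zero) and qualities $1\ge q_1\ge q_2\ge q_3\ge0$ such that, with $n=3$ and visibilities $(v_1,v_2,v_3)=(1,1,c)$, one has $\max_\sigma f(\sigma)\ge(\frac{1}{c}-\delta)\lambda^q$.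
   Context: Static trial-offer market: a ranking $\sigma\in S_n$ places product $i$ in position $\sigma_i$, position $p$ has visibility $v_p$, product $i$ is tried with probability $\frac{v_{\sigma_i}a_i}{\sum_j v_{\sigma_j}a_j}$ and then purchased with probability $q_i$; $f(\sigma)$ is the expected number of purchases in one step. The quality ranking is the identity ranking $\sigma_i=i$. *)

From HB Require Import structures.
From mathcomp Require Import all_boot all_order all_algebra all_fingroup.
Set Implicit Arguments. Unset Strict Implicit. Unset Printing Implicit Defensive.
Import Order.TTheory GRing.Theory Num.Theory.
Local Open Scope ring_scope.

(* Products/positions indexed by 'I_n (paper's index i corresponds to i-1).
   A ranking sigma : 'S_n places product i at position sigma i. *)
Definition ftrial (R : realFieldType) (n : nat) (v a q : 'I_n -> R)
  (s : 'S_n) : R :=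
  (\sum_(i < n) v (s i) * a i * q i) / (\sum_(j < n) v (s j) * a j).

Definition lambdaq (R : realFieldType) (n : nat) (v a q : 'I_n -> R) : R :=
  ftrial v a q 1%g.

Definition fmax (R : realFieldType) (n : nat) (v a q : 'I_n -> R) : R :=
  \big[Num.max/ftrial v a q 1%g]_(s : 'S_n) ftrial v a q s.

Definition vis3 (R : realFieldType) (c : R) : 'I_3 -> R :=
  fun i => [:: 1; 1; c]`_i.

From HB Require Import structures.
From mathcomp Require Import all_boot all_order all_algebra all_fingroup.
From mathcomp Require Import ring lra.
Set Implicit Arguments. Unset Strict Implicit. Unset Printing Implicit Defensive.
Import Order.TTheory GRing.Theory Num.Theory.
Local Open Scope ring_scope.

(* Under any ranking, the trial-weighted quality is a q-average with weights
   v_{sigma_i} a_i, which lie between v_n a_i and v_1 a_i; hence f(sigma) is at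
   most (v_1 / v_n) times the plain a-average of q.  For the quality ranking,
   v and q are both nonincreasing, so by Chebyshev's sum inequality weighting
   by v can only raise the average: that plain average is at most lambda^q.
   Tightness: with visibilities (1, 1, c), give the only good product a tiny
   appeal e; demoting the worthless second product to visibility c raises the
   good product's trial share from e/(e+1) to e/(e+c), a ratio tending to 1/c. *)

Lemma chebyshev_sum (R : realDomainType) (I : finType) (w f g : I -> R) :
  (forall i, 0 <= w i) -> (forall i j, 0 <= (f i - f j) * (g i - g j)) ->
  (\sum_i w i * f i) * (\sum_j w j * g j) <=
  (\sum_i w i * f i * g i) * (\sum_j w j).
Proof.
move=> w_ge0 fg_sim.
have dsum_ge0 : 0 <= \sum_i \sum_j w i * w j * ((f i - f j) * (g i - g j)).
  by apply: sumr_ge0 => i _; apply: sumr_ge0 => j _; exact/mulr_ge0/fg_sim/mulr_ge0.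
(* The double sum is twice the difference of the two sides. *)
have dsum_eq : \sum_i \sum_j w i * w j * ((f i - f j) * (g i - g j)) =
    \sum_i \sum_j (w i * f i * g i * w j + w i * (w j * f j * g j))
  - \sum_i \sum_j (w i * f i * (w j * g j) + w i * g i * (w j * f j)).
  rewrite -sumrB; apply: eq_bigr => i _; rewrite -sumrB.
  by apply: eq_bigr => j _; ring.
rewrite dsum_eq !(eq_bigr _ (fun i _ => big_split _ _ _ _ _)) !big_split in dsum_ge0.
rewrite /= -!big_distrlr /= in dsum_ge0.
rewrite -subr_ge0; nra.
Qed.

Lemma nonincreasing_similarly_ordered (R : realDomainType) n (f g : 'I_n -> R) :
  (forall i j : 'I_n, (i <= j)%N -> f j <= f i) ->
  (forall i j : 'I_n, (i <= j)%N -> g j <= g i) ->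
  forall i j, 0 <= (f i - f j) * (g i - g j).
Proof.
move=> f_noninc g_noninc i j; case: (leqP i j) => [le_ij | /ltnW le_ji].
  by apply: mulr_ge0; rewrite subr_ge0; [apply: f_noninc | apply: g_noninc].
by rewrite -mulrNN; apply: mulr_ge0; rewrite oppr_ge0 subr_le0;
  [apply: f_noninc | apply: g_noninc].
Qed.

Section WeightedSums.
Variables (R : realDomainType) (I : finType) (w x : I -> R).
Hypothesis w_ge0 : forall i, 0 <= w i.

Lemma ler_wsum_min lo : (forall i, lo <= x i) -> lo * \sum_i w i <= \sum_i x i * w i.
Proof. by move=> lo_x; rewrite mulr_sumr; apply: ler_sum => i _; apply: ler_wpM2r. Qed.

Lemma ler_wsum_max hi : (forall i, x i <= hi) -> \sum_i x i * w i <= hi * \sum_i w i.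
Proof. by move=> x_hi; rewrite mulr_sumr; apply: ler_sum => i _; apply: ler_wpM2r. Qed.

End WeightedSums.

Lemma ftrial_le_mean (R : realFieldType) n (v a q : 'I_n -> R) (vlo vhi : R) s :
  0 < vlo -> (forall i, vlo <= v i <= vhi) ->
  (forall i, 0 <= a i) -> (forall i, 0 <= q i) -> 0 < \sum_i a i ->
  ftrial v a q s <= vhi / vlo * ((\sum_i a i * q i) / \sum_i a i).
Proof.
move=> vlo_gt0 v_bounds a_ge0 q_ge0 A_gt0.
have vhi_gt0 : 0 < vhi.
  case: n v a q s v_bounds a_ge0 q_ge0 A_gt0 => [|n] v a q s v_bounds _ _ A_gt0.
    by rewrite big_ord0 ltxx in A_gt0.
  case/andP: (v_bounds ord0) => lo_v v_hi.
  exact: lt_le_trans vlo_gt0 (le_trans lo_v v_hi).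
have aq_ge0 i : 0 <= a i * q i by apply: mulr_ge0.
have N_le : \sum_i v (s i) * a i * q i <= vhi * \sum_i a i * q i.
  under eq_bigr do rewrite -mulrA.
  by apply: ler_wsum_max => // i; case/andP: (v_bounds (s i)).
have D_ge : vlo * \sum_i a i <= \sum_i v (s i) * a i.
  by apply: ler_wsum_min => // i; case/andP: (v_bounds (s i)).
rewrite /ftrial; set K := vhi / vlo * _.
have Aq_ge0 : 0 <= \sum_i a i * q i by apply: sumr_ge0.
have K_ge0 : 0 <= K by apply: mulr_ge0; apply: divr_ge0; try exact: ltW.
have K_scale : K * (vlo * \sum_i a i) = vhi * \sum_i a i * q i.
  by rewrite /K; field; rewrite !gt_eqF.
rewrite ler_pdivrMr; last exact: lt_le_trans (mulr_gt0 vlo_gt0 A_gt0) D_ge.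
by rewrite (le_trans N_le) // -K_scale ler_wpM2l.
Qed.

Lemma lambdaqE (R : realFieldType) n (v a q : 'I_n -> R) :
  lambdaq v a q = (\sum_i v i * a i * q i) / \sum_i v i * a i.
Proof. by rewrite /lambdaq /ftrial; congr (_ / _); apply: eq_bigr => i _; rewrite perm1. Qed.

Lemma mean_le_lambdaq (R : realFieldType) n (v a q : 'I_n -> R) (vlo : R) :
  0 < vlo -> (forall i, vlo <= v i) ->
  (forall i, 0 <= a i) -> 0 < \sum_i a i ->
  (forall i j, 0 <= (v i - v j) * (q i - q j)) ->
  (\sum_i a i * q i) / \sum_i a i <= lambdaq v a q.
Proof.
move=> vlo_gt0 vlo_v a_ge0 A_gt0 vq_sim; rewrite lambdaqE.
have D_gt0 : 0 < \sum_i v i * a i.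
  exact: lt_le_trans (mulr_gt0 vlo_gt0 A_gt0) (ler_wsum_min a_ge0 vlo_v).
have qv_sim i j : 0 <= (q i - q j) * (v i - v j) by rewrite mulrC.
have avE : \sum_i a i * v i = \sum_i v i * a i.
  by apply: eq_bigr => i _; exact: mulrC.
have aqvE : \sum_i a i * q i * v i = \sum_i v i * a i * q i.
  by apply: eq_bigr => i _; ring.
rewrite ler_pdivrMr // mulrAC ler_pdivlMr // -avE -aqvE.
exact: chebyshev_sum a_ge0 qv_sim.
Qed.

Lemma fmax_le_visibility_ratio (R : realFieldType) n (v a q : 'I_n.+1 -> R) :
  (forall i j : 'I_n.+1, (i <= j)%N -> v j <= v i) -> 0 < v ord_max ->
  (forall i j : 'I_n.+1, (i <= j)%N -> q j <= q i) -> 0 <= q ord_max ->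
  (forall i, 0 <= a i) -> 0 < \sum_j a j ->
  fmax v a q <= v ord0 / v ord_max * lambdaq v a q.
Proof.
move=> v_noninc vmax_gt0 q_noninc qmax_ge0 a_ge0 A_gt0.
have v_bounds i : v ord_max <= v i <= v ord0.
  by apply/andP; split; apply: v_noninc; rewrite ?leq_ord.
have vmax_le i : v ord_max <= v i by case/andP: (v_bounds i).
have v0_gt0 : 0 < v ord0 := lt_le_trans vmax_gt0 (vmax_le ord0).
have q_ge0 i : 0 <= q i := le_trans qmax_ge0 (q_noninc i ord_max (leq_ord i)).
have mean_le := mean_le_lambdaq vmax_gt0 vmax_le a_ge0 A_gt0
  (nonincreasing_similarly_ordered v_noninc q_noninc).
have ftrial_le s : ftrial v a q s <= v ord0 / v ord_max * lambdaq v a q.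
  apply: le_trans (ftrial_le_mean s vmax_gt0 v_bounds a_ge0 q_ge0 A_gt0) _.
  by apply: ler_wpM2l mean_le; rewrite divr_ge0 // ltW.
by apply: bigmax_le => [|s _]; apply: ftrial_le.
Qed.

Definition tight_appeal (R : realFieldType) (e : R) : 'I_3 -> R :=
  fun i => [:: e; 1; 0]`_i.

Definition tight_quality (R : realFieldType) : 'I_3 -> R :=
  fun i => [:: 1; 0; 0]`_i.
Arguments tight_quality {R}.

Definition swap_last_two : 'S_3 := tperm (lift ord0 ord0) ord_max.

Lemma lambdaq_tight (R : realFieldType) (c e : R) :
  lambdaq (vis3 c) (tight_appeal e) tight_quality = e / (e + 1).
Proof.
rewrite lambdaqE !big_ord_recl !big_ord0 /vis3 /tight_appeal /tight_quality /=.
by congr (_ / _); ring.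
Qed.

Lemma ftrial_tight_swap_last_two (R : realFieldType) (c e : R) :
  ftrial (vis3 c) (tight_appeal e) tight_quality swap_last_two = e / (e + c).
Proof.
rewrite /ftrial !big_ord_recl !big_ord0 /vis3 /tight_appeal /tight_quality /swap_last_two.
by rewrite !permE /=; congr (_ / _); ring.
Qed.

Lemma tight_ratio_bound (R : realFieldType) (c delta e : R) :
  0 < c -> 0 < e -> e <= delta * c ^+ 2 ->
  (c^-1 - delta) * (e / (e + 1)) <= e / (e + c).
Proof.
move=> c_gt0 e_gt0 e_le.
have cinv_e_le : c^-1 * e <= delta * c.
  by rewrite -(ler_pM2l c_gt0) mulrA divff ?gt_eqF // mul1r; lra.
have delta_gt0 : 0 < delta by nra.
rewrite mulrA ler_pdivrMr; last lra.
rewrite mulrAC ler_pdivlMr; last lra.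
have -> : (c^-1 - delta) * e * (e + c) = c^-1 * e * e + e - delta * e * e - delta * e * c.
  by field; rewrite gt_eqF.
have : c^-1 * e * e <= delta * c * e by rewrite ler_pM2r.
have : 0 <= delta * e * e by rewrite !mulr_ge0 ?ltW.
nra.
Qed.

Theorem mainTheorem10 (R : realFieldType) :
  (forall (n : nat) (v a q : 'I_n.+1 -> R),
     (forall i j : 'I_n.+1, (i <= j)%N -> v j <= v i) ->
     0 < v ord_max ->
     (forall i j : 'I_n.+1, (i <= j)%N -> q j <= q i) ->
     q ord0 <= 1 ->
     0 <= q ord_max ->
     (forall i, 0 <= a i) ->
     0 < \sum_(j < n.+1) a j ->
     fmax v a q <= v ord0 / v ord_max * lambdaq v a q)
  /\
  (forall c delta : R, 0 < c -> c < 1 -> 0 < delta ->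
     exists a q : 'I_3 -> R,
       (forall i, 0 <= a i) /\ (exists i, a i != 0) /\
       (forall i j : 'I_3, (i <= j)%N -> q j <= q i) /\
       q ord0 <= 1 /\ 0 <= q ord_max /\
       (c^-1 - delta) * lambdaq (vis3 c) a q <= fmax (vis3 c) a q).
Proof.
split=> [n v a q v_noninc vmax_gt0 q_noninc _ | c delta c_gt0 _ delta_gt0].
  exact: fmax_le_visibility_ratio.
set e := delta * c ^+ 2.
have e_gt0 : 0 < e by rewrite mulr_gt0 ?exprn_gt0.
exists (tight_appeal e), tight_quality.
split; first by case=> [[|[|[|k]]]] ? //=; exact: ltW.
split; first by exists ord0; rewrite /= gt_eqF.
split; first by case=> [[|[|[|k]]]] ?; case=> [[|[|[|l]]]] ?.
do 2!split=> //.
rewrite lambdaq_tight (le_trans _ (le_bigmax _ _ swap_last_two)) // ftrial_tight_swap_last_two.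
exact: tight_ratio_bound.
Qed.
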